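(* In the setting described in the context, let $U_0,\dots,U_d$ be one of the six decompositions below, with $U_{-1}=U_{d+1}=0$ and empty sums equal to $0$. Then for $0\le i\le d$: $[0D]$: $(K^*-q^{d-2i}I)U_i\subseteq U_{i-1}$ and $(K^{*-1}-q^{2i-d}I)U_i\subseteq U_0+\cdots+U_{i-1}$; $[0^*D^*]$: $(K^*-q^{d-2i}I)U_i\subseteq U_{i+1}+\cdots+U_d$ and $(K^{*-1}-q^{2i-d}I)U_i\subseteq U_{i+1}$; $[0^*D]$: $K^*U_i\subseteq U_{i-1}+\cdots+U_d$ and $K^{*-1}U_i\subseteq U_0+\cdots+U_{i+1}$; $[0^*0]$: $(K^*-q^{2i-d}I)U_i\subseteq U_{i+1}+\cdots+U_d$ and $(K^{*-1}-q^{d-2i}I)U_i\subseteq U_{i+1}$; $[D^*0]$: $(K^*-q^{2i-d}I)U_i=0$ and $(K^{*-1}-q^{d-2i}I)U_i=0$; $[D^*D]$: $(K^*-q^{2i-d}I)U_i\subseteq U_{i-1}$ and $(K^{*-1}-q^{d-2i}I)U_i\subseteq U_0+\cdots+U_{i-1}$.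
   Context: $\mathbb K$ is an algebraically closed field, $q\in\mathbb K$ nonzero and not a root of unity, $V$ a nonzero finite-dimensional $\mathbb K$-vector space. A tridiagonal pair on $V$ is an ordered pair $A,A^*$ of linear maps $V\to V$ such that: (i) each of $A,A^*$ is diagonalizable; (ii) there is an ordering $V_0,\dots,V_d$ of the eigenspaces of $A$ with $A^*V_i\subseteq V_{i-1}+V_i+V_{i+1}$ ($V_{-1}=V_{d+1}=0$); (iii) there is an ordering $V^*_0,\dots,V^*_\delta$ of the eigenspaces of $A^*$ with $AV^*_i\subseteq V^*_{i-1}+V^*_i+V^*_{i+1}$ ($V^*_{-1}=V^*_{\delta+1}=0$); (iv) no subspace $W\ne0,V$ satisfies $AW\subseteq W$, $A^*W\subseteq W$. It is known $d=\delta$; orderings as in (ii),(iii) are called standard. Setting: $A,A^*$ is a tridiagonal pair on $V$; $V_0,\dots,V_d$ (resp. $V^*_0,\dots,V^*_d$) is a standard ordering of the eigenspaces of $A$ (resp. $A^*$); the eigenvalue of $A$ on $V_i$ is $aq^{2i-d}$ and that of $A^*$ on $V^*_i$ is $a^*q^{d-2i}$ for some nonzero $a,a^*\in\mathbb K$. The six decompositions of $V$ (sequences of nonzero subspaces whose sum is direct and equals $V$) are, for $0\le i\le d$: $[0D]$: $U_i=V_i$; $[0^*D^*]$: $U_i=V^*_i$; $[0^*D]$: $U_i=(V^*_0+\cdots+V^*_i)\cap(V_i+\cdots+V_d)$; $[0^*0]$: $U_i=(V^*_0+\cdots+V^*_i)\cap(V_0+\cdots+V_{d-i})$; $[D^*0]$: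 $U_i=(V^*_{d-i}+\cdots+V^*_d)\cap(V_0+\cdots+V_{d-i})$; $[D^*D]$: $U_i=(V^*_{d-i}+\cdots+V^*_d)\cap(V_i+\cdots+V_d)$. $K^*:V\to V$ is the linear map acting as $q^{2i-d}I$ on the $i$th subspace of $[D^*0]$ for each $i$. *)

From HB Require Import structures.
From mathcomp Require Import all_boot all_order all_algebra.
Set Implicit Arguments. Unset Strict Implicit. Unset Printing Implicit Defensive.
Import Order.TTheory GRing.Theory Num.Theory.
Local Open Scope ring_scope.
Local Open Scope vspace_scope.

Section TD.
Variables (K : fieldType) (V : vectType K).

Definition is_eigenspace (f : 'End(V)) (W : {vspace V}) : Prop :=
  exists th : K, W = passmx.leigenspace f th /\ W != 0%VS.

Definition diagonalizable (f : 'End(V)) : Prop :=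
  exists s : seq K, (\sum_(th <- s) passmx.leigenspace f th)%VS = fullv.

(* V_{i-1} + V_i + V_{i+1} with V_{-1} = V_{d+1} = 0 *)
Definition tri_sum (d : nat) (Vs : nat -> {vspace V}) (i : nat) : {vspace V} :=
  (\sum_(j < d.+1 | (i <= j.+1)%N && (j <= i.+1)%N) Vs j)%VS.

Definition standard_ordering (f g : 'End(V)) (d : nat) (Vs : nat -> {vspace V})
  : Prop :=
  [/\ (forall i, (i <= d)%N -> is_eigenspace f (Vs i)),
      (forall i j, (i <= d)%N -> (j <= d)%N -> Vs i = Vs j -> i = j),
      (forall W, is_eigenspace f W -> exists2 i, (i <= d)%N & W = Vs i) &
      (forall i, (i <= d)%N -> (g @: Vs i <= tri_sum d Vs i)%VS)].

Definition TD_pair (A As : 'End(V)) : Prop :=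
  fullv != (0 : {vspace V})%VS /\
  [/\ diagonalizable A, diagonalizable As,
      (exists d Vs, standard_ordering A As d Vs),
      (exists d Vs, standard_ordering As A d Vs) &
      (forall W : {vspace V}, (A @: W <= W)%VS -> (As @: W <= W)%VS ->
        W = 0%VS \/ W = fullv)].

Definition range_sum (d : nat) (U : nat -> {vspace V}) (lo hi : nat)
  : {vspace V} :=
  (\sum_(j < d.+1 | (lo <= j)%N && (j <= hi)%N) U j)%VS.

Definition prevU (U : nat -> {vspace V}) (i : nat) : {vspace V} :=
  if i is i'.+1 then U i' else 0%VS.
Definition nextU (d : nat) (U : nat -> {vspace V}) (i : nat) : {vspace V} :=
  if (i < d)%N then U i.+1 else 0%VS.

Definition dec_0D (d : nat) (Vs Vss : nat -> {vspace V}) (i : nat) := Vs i.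
Definition dec_0sDs (d : nat) (Vs Vss : nat -> {vspace V}) (i : nat) := Vss i.
Definition dec_0sD (d : nat) (Vs Vss : nat -> {vspace V}) (i : nat) :=
  (range_sum d Vss 0 i :&: range_sum d Vs i d)%VS.
Definition dec_0s0 (d : nat) (Vs Vss : nat -> {vspace V}) (i : nat) :=
  (range_sum d Vss 0 i :&: range_sum d Vs 0 (d - i))%VS.
Definition dec_Ds0 (d : nat) (Vs Vss : nat -> {vspace V}) (i : nat) :=
  (range_sum d Vss (d - i) d :&: range_sum d Vs 0 (d - i))%VS.
Definition dec_DsD (d : nat) (Vs Vss : nat -> {vspace V}) (i : nat) :=
  (range_sum d Vss (d - i) d :&: range_sum d Vs i d)%VS.

Definition sum_pred (d : nat) (U : nat -> {vspace V}) (P : nat -> bool)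
  : {vspace V} :=
  (\sum_(j < d.+1 | P j) U j)%VS.

End TD.

Definition qpow (K : fieldType) (q : K) (d i : nat) : K :=
  q ^ ((2 * i)%:Z - d%:Z).
Definition qpowN (K : fieldType) (q : K) (d i : nat) : K :=
  q ^ (d%:Z - (2 * i)%:Z).

(* The [D*0] decomposition U_i = (V*_{d-i} + ... + V*_d) :&: (V_0 + ... + V_{d-i})
   is a split decomposition: irreducibility forces V = U_0 + ... + U_d, with
   (A - a q^(d-2i)) U_i <= U_{i+1} and (A* - a* q^(2i-d)) U_i <= U_{i-1}.  As K*
   acts on U_i by q^(2i-d), it is invertible and satisfies the twisted
   commutator identities
     q^2 A K* - K* A = (q^2 - 1) a,     q^2 A* K*^-1 - K*^-1 A* = (q^2 - 1) a*.
   For x in V_i the first one makes (K* - q^(d-2i)) x an eigenvector of A for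
   a q^(2(i-1)-d), i.e. an element of V_{i-1}; likewise (K*^-1 - q^(2i-d)) V*_i
   lies in V*_{i+1}.  Hence K* and K*^-1 are triangular with respect to both
   eigenspace decompositions, which is [0D] and [0*D*].  The decompositions
   [0*D], [0*0] and [D*D] are split as well, and for a split decomposition
   T_i :&: S_i irreducibility also gives T_i = U_0 + ... + U_i and
   S_i = U_i + ... + U_d; the triangularity of K*^{+-1} on these flags yields
   the remaining inclusions.  Reversing one or both eigenspace orderings turns
   every split decomposition into [0*D], so it suffices to analyse [0*D]. *)

From Pilot Require Import Defs.
From HB Require Import structures.
From mathcomp Require Import all_boot all_order all_algebra.
From mathcomp Require Import zify.
Import Order.TTheory GRing.Theory Num.Theory.
Local Open Scope ring_scope.

Set Implicit Arguments. Unset Strict Implicit. Unset Printing Implicit Defensive.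

Section SumPred.
Variables (K : fieldType) (V : vectType K).
Implicit Types (n : nat) (E U : nat -> {vspace V}) (P Q : pred nat) (W : {vspace V}).

Lemma range_sumE n E lo hi :
  range_sum n E lo hi = sum_pred n E (fun j => (lo <= j <= hi)%N).
Proof. by []. Qed.

Lemma tri_sumE n E i :
  tri_sum n E i = sum_pred n E (fun j => (i <= j.+1)%N && (j <= i.+1)%N).
Proof. by []. Qed.

Lemma mem_sum_pred n E P j x :
  (j <= n)%N -> P j -> x \in E j -> x \in sum_pred n E P.
Proof.
by move=> jn Pj xE; rewrite memvE (sumv_sup (Ordinal (jn : (j < n.+1)%N))) // -memvE.
Qed.

Lemma sum_pred_sub n E P W :
  (forall j x, (j <= n)%N -> P j -> x \in E j -> x \in W) ->
  forall x, x \in sum_pred n E P -> x \in W.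
Proof.
move=> EW; apply/subvP/subv_sumP => j Pj; apply/subvP => x.
exact: EW (ltn_ord j) Pj.
Qed.

Lemma sum_pred_lfun n E P W (f : 'End(V)) :
  (forall j x, (j <= n)%N -> P j -> x \in E j -> f x \in W) ->
  forall x, x \in sum_pred n E P -> f x \in W.
Proof.
by move=> EW x; rewrite memv_preim; apply: sum_pred_sub => j y jn Pj yE;
  rewrite -memv_preim; apply: EW Pj yE.
Qed.

Lemma sum_pred_shift n E P W (f : 'End(V)) (c : K) :
  (forall j x, (j <= n)%N -> P j -> x \in E j -> f x - c *: x \in W) ->
  forall x, x \in sum_pred n E P -> f x - c *: x \in W.
Proof.
move=> EW x xE; have := sum_pred_lfun (f := (f - c *: \1)%VF) _ xE.
by rewrite !lfun_simp; apply=> j y jn Pj yE; rewrite !lfun_simp; apply: EW Pj yE.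
Qed.

Lemma sum_pred_mono n E P Q :
  (forall j, (j <= n)%N -> P j -> Q j) ->
  forall x, x \in sum_pred n E P -> x \in sum_pred n E Q.
Proof. by move=> PQ; apply: sum_pred_sub => j x jn /(PQ j jn); apply: mem_sum_pred. Qed.

Lemma sum_pred_eq0 n E P x :
  (forall j, (j <= n)%N -> ~~ P j) -> x \in sum_pred n E P -> x = 0.
Proof.
move=> nP xE; apply/eqP; rewrite -memv0; move: x xE.
by apply: sum_pred_sub => j x jn Pj; have := nP j jn; rewrite Pj.
Qed.

Lemma sum_predID n E P Q :
  sum_pred n E P = (sum_pred n E [predI P & Q] + sum_pred n E [predI P & predC Q])%VS.
Proof. exact: bigID. Qed.

Lemma eq_sum_pred n E U P :
  (forall j, (j <= n)%N -> E j = U j) -> sum_pred n E P = sum_pred n U P.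
Proof. by move=> EU; apply: eq_bigr => j _; apply: EU (ltn_ord j). Qed.

Lemma sum_pred_rev n E P :
  sum_pred n (fun i => E (n - i)%N) P = sum_pred n E (fun j => P (n - j)%N).
Proof.
rewrite /sum_pred (reindex_inj rev_ord_inj) /=.
by apply: eq_big => [j|j _] //=; rewrite subSS subKn // -ltnS.
Qed.

Lemma range_sum_rev n E lo hi : (lo <= n)%N ->
  range_sum n (fun i => E (n - i)%N) lo hi = range_sum n E (n - hi) (n - lo).
Proof.
rewrite !range_sumE sum_pred_rev => lon.
by apply: eq_bigl => j; have := ltn_ord j; lia.
Qed.

Lemma range_sum_mono n E lo hi lo' hi' x : (lo' <= lo)%N -> (hi <= hi')%N ->
  x \in range_sum n E lo hi -> x \in range_sum n E lo' hi'.
Proof. by move=> lo_le hi_le; rewrite !range_sumE; apply: sum_pred_mono => j _; lia. Qed.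

Lemma prevU_rev d (E : nat -> {vspace V}) i : (i <= d)%N ->
  prevU (fun j => E (d - j)%N) (d - i) = nextU d E i.
Proof.
rewrite /nextU leq_eqVlt => /orP[/eqP-> | id]; first by rewrite subnn ltnn.
by rewrite id -(subnSK id) /= subKn.
Qed.

End SumPred.

Section Eigenvectors.
Variables (K : fieldType) (V : vectType K).

Lemma mem_leigenspace (f : 'End(V)) c x :
  (x \in passmx.leigenspace f c) = (f x == c *: x).
Proof. by rewrite memv_ker !lfun_simp subr_eq0. Qed.

Lemma eigenvectors_sum_eq0 (f : 'End(V)) n (th : nat -> K) c (xs : nat -> V) :
  (forall j, (j < n)%N -> f (xs j) = th j *: xs j) ->
  (forall j, (j < n)%N -> th j = c -> xs j = 0) ->
  f (\sum_(j < n) xs j) = c *: \sum_(j < n) xs j -> \sum_(j < n) xs j = 0.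
Proof.
elim: n xs => [|n IH] xs eig thc; first by rewrite big_ord0.
rewrite big_ord_recr /=; set y := \sum_(j < n) xs j.
have eig' j : (j < n)%N -> f (xs j) = th j *: xs j by move/leqW/eig.
have thc' j : (j < n)%N -> th j = c -> xs j = 0 by move/leqW/thc.
have [/thc -> // | thn_c] := eqVneq (th n) c; first by rewrite !addr0; apply: IH.
move=> fx.
have zE : \sum_(j < n) (th j - th n) *: xs j = (c - th n) *: (y + xs n).
  rewrite scalerBl -fx linearD /= eig // scalerDr opprD addrACA subrr addr0.
  rewrite /y linear_sum scaler_sumr -sumrB; apply: eq_bigr => j _.
  by rewrite /= eig' // scalerBl.
have : (c - th n) *: (y + xs n) = 0.
  rewrite -zE; apply: (IH (fun j => (th j - th n) *: xs j)).
  - by move=> j jn; rewrite linearZ /= eig' // !scalerA mulrC.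
  - by move=> j jn /(thc' j jn) ->; rewrite scaler0.
  - by rewrite zE linearZ /= fx !scalerA mulrC.
by move/eqP; rewrite scaler_eq0 subr_eq0 eq_sym (negbTE thn_c) => /eqP.
Qed.

Lemma standard_ordering_rev (f g : 'End(V)) d (E : nat -> {vspace V}) :
  standard_ordering f g d E -> standard_ordering f g d (fun i => E (d - i)%N).
Proof.
case=> eigE injE exE triE; split.
- by move=> i _; apply: eigE; apply: leq_subr.
- by move=> i j id jd /injE; rewrite !leq_subr => /(_ isT isT); lia.
- by move=> W /exE[i id ->]; exists (d - i)%N; rewrite ?leq_subr ?subKn.
move=> i id; apply/subvP => x /(subvP (triE _ (leq_subr i d))).
by rewrite !tri_sumE sum_pred_rev; apply: sum_pred_mono => j jd; lia.
Qed.

Section StandardOrdering.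
Variables (f g : 'End(V)) (d : nat) (E : nat -> {vspace V}) (t : nat -> K).
Hypothesis SO : standard_ordering f g d E.
Hypothesis Et : forall i, (i <= d)%N -> E i = passmx.leigenspace f (t i).

Lemma eigenvectorP i x : (i <= d)%N -> (x \in E i) = (f x == t i *: x).
Proof. by move=> id; rewrite Et // mem_leigenspace. Qed.

Lemma standard_ordering_neq0 i : (i <= d)%N -> E i != 0%VS.
Proof. by case: SO => eigE _ _ _ /eigE[c []]. Qed.

Lemma eigenvalue_inj i j : (i <= d)%N -> (j <= d)%N -> t i = t j -> i = j.
Proof. by case: SO => _ injE _ _ id jd tij; apply: injE; rewrite ?Et ?tij. Qed.

Lemma eigenvalue_exhaustive c x :
  f x = c *: x -> x != 0 -> exists2 j, (j <= d)%N & c = t j.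
Proof.
case: SO => _ _ exE _ fx x0.
have xc : x \in passmx.leigenspace f c by rewrite mem_leigenspace fx.
have [|j jd Ej] := exE (passmx.leigenspace f c).
  by exists c; split=> //; apply: contraNneq x0 => Ec0; rewrite -memv0 -Ec0.
exists j => //; move: xc; rewrite Ej eigenvectorP // fx -subr_eq0 -scalerBl.
by rewrite scaler_eq0 (negbTE x0) orbF subr_eq0 => /eqP.
Qed.

Lemma range_sum_full : Defs.diagonalizable f -> range_sum d E 0 d = fullv.
Proof.
case: SO => _ _ exE _ [s sfull]; apply/eqP; rewrite eqEsubv subvf /= -sfull.
elim/big_rec: _ => [|c W _ sW]; first exact: sub0v.
rewrite subv_add sW andbT.
have [-> | nz] := eqVneq (passmx.leigenspace f c) 0%VS; first exact: sub0v.
have [j jd ->] := exE _ (ex_intro _ c (conj erefl nz)).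
by apply/subvP => x; rewrite range_sumE; apply: mem_sum_pred; rewrite /= ?jd.
Qed.

Lemma eigen_sum_out k (P : pred nat) x :
  (k <= d)%N -> x \in E k -> ~~ P k -> x \in sum_pred d E P -> x = 0.
Proof.
move=> kd; rewrite eigenvectorP // => /eqP fx nPk /memv_sumP[vs vsE xE].
pose xs j := if P j then vs (inord j) else 0.
have {}xE : x = \sum_(j < d.+1) xs j.
  by rewrite xE big_mkcond; apply: eq_bigr => j _; rewrite /xs inord_val.
rewrite xE in fx *; apply: (eigenvectors_sum_eq0 (th := t) _ _ fx) => j jd; rewrite /xs.
  case: ifP => Pj; last by rewrite linear0 scaler0.
  by apply/eqP; rewrite -eigenvectorP //; have := vsE (inord j); rewrite inordK //; apply.
by move/(eigenvalue_inj jd kd) => jk; rewrite jk (negbTE nPk).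
Qed.

Lemma range_sum_eigen_shift lo hi m x : x \in range_sum d E lo hi ->
  f x - t m *: x \in sum_pred d E (fun j => (lo <= j <= hi)%N && (j != m)).
Proof.
rewrite range_sumE; apply: sum_pred_shift => j y jd jr yE.
move: yE (yE); rewrite {1}eigenvectorP // => /eqP -> yE; rewrite -scalerBl.
have [-> | jm] := eqVneq j m; first by rewrite subrr scale0r rpred0.
by apply: rpredZ; apply: mem_sum_pred yE => //=; rewrite jm andbT.
Qed.

Lemma range_sum_tridiagonal lo hi x : x \in range_sum d E lo hi ->
  g x \in range_sum d E lo.-1 hi.+1.
Proof.
case: SO => _ _ _ triE; rewrite !range_sumE; apply: sum_pred_lfun => j y jd jr yE.
have := subvP (triE j jd) _ (memv_img g yE).
by rewrite tri_sumE; apply: sum_pred_mono => k _; lia.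
Qed.

End StandardOrdering.
End Eigenvectors.

Section Irreducible.
Variables (K : fieldType) (V : vectType K) (A As : 'End(V)).
Hypothesis irr : forall W : {vspace V},
  (A @: W <= W)%VS -> (As @: W <= W)%VS -> W = 0%VS \/ W = fullv.

Lemma raise_lower_sum_trivial n (F : nat -> {vspace V}) (al be : nat -> K) :
  (forall i x, (i <= n)%N -> x \in F i -> A x - al i *: x \in nextU n F i) ->
  (forall i x, (i <= n)%N -> x \in F i -> As x - be i *: x \in prevU F i) ->
  sum_pred n F predT = 0%VS \/ sum_pred n F predT = fullv.
Proof.
have stable (f : 'End(V)) (c : nat -> K) (N : nat -> {vspace V}) :
    (forall i, (i <= n)%N -> (N i <= sum_pred n F predT)%VS) ->
    (forall i x, (i <= n)%N -> x \in F i -> f x - c i *: x \in N i) ->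
    (f @: sum_pred n F predT <= sum_pred n F predT)%VS.
  move=> NF fF; apply/subvP => _ /memv_imgP[x xF ->]; move: x xF.
  apply: sum_pred_lfun => i x id _ xF; rewrite -(subrK (c i *: x) (f x)).
  by rewrite rpredD ?rpredZ ?(subvP (NF i id) _ (fF i x id xF)) ?(mem_sum_pred _ _ xF).
move=> Araise Aslower; apply: irr; [apply: stable Araise | apply: stable Aslower].
  move=> i _; rewrite /nextU; case: ifP => [i_n | _]; last exact: sub0v.
  by apply/subvP => x; apply: mem_sum_pred.
case=> [|i] id /=; first exact: sub0v.
by apply/subvP => x; apply: mem_sum_pred; rewrite // ltnW.
Qed.

Section SplitDecomposition.
Variables (d : nat) (E Es : nat -> {vspace V}) (t ts : nat -> K).
Hypotheses (SO : standard_ordering A As d E) (SOs : standard_ordering As A d Es).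
Hypothesis Et : forall i, (i <= d)%N -> E i = passmx.leigenspace A (t i).
Hypothesis Ets : forall i, (i <= d)%N -> Es i = passmx.leigenspace As (ts i).
Hypothesis Efull : range_sum d E 0 d = fullv.

Local Notation T := (range_sum d Es 0).
Local Notation S i := (range_sum d E i d).
Local Notation U := (dec_0sD d E Es).

Lemma range_sum_above x i : (d < i)%N -> x \in S i -> x = 0.
Proof. by move=> di; rewrite range_sumE; apply: sum_pred_eq0 => j jd; lia. Qed.

Lemma T_S_raise l m x : x \in (T l :&: S m)%VS ->
  A x - t m *: x \in (T l.+1 :&: S m.+1)%VS.
Proof.
rewrite !memv_cap => /andP[xT xS]; apply/andP; split.
  by rewrite rpredB ?rpredZ ?(range_sum_tridiagonal SOs xT) ?(range_sum_mono _ _ xT).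
move: (range_sum_eigen_shift Et m xS); rewrite range_sumE.
by apply: sum_pred_mono => j _; lia.
Qed.

Lemma T_S_lower l m x : x \in (T l :&: S m)%VS ->
  As x - ts l *: x \in (sum_pred d Es (fun j => (j < l)%N) :&: S m.-1)%VS.
Proof.
rewrite !memv_cap => /andP[xT xS]; apply/andP; split.
  by move: (range_sum_eigen_shift Ets l xT); apply: sum_pred_mono => j _; lia.
rewrite rpredB ?rpredZ ?(range_sum_mono _ _ xS) ?leq_pred //.
move: (range_sum_tridiagonal SO xS); rewrite !range_sumE.
by apply: sum_pred_mono => j jd; lia.
Qed.

(* [F 0] is [U]; [F 1] is the family whose vanishing is [cap_T_S_succ]. *)
Local Notation F m := (fun j => T j :&: S (m + j))%VS.

Lemma F_raise m j x : x \in F m j -> A x - t (m + j) *: x \in nextU d (F m) j.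
Proof.
move=> /T_S_raise; rewrite /nextU -addnS; case: ifP => // /negbT; rewrite -leqNgt => dj.
by rewrite memv_cap => /andP[_ /(range_sum_above _)->]; rewrite ?mem0v //; lia.
Qed.

Lemma F_lower m j x : x \in F m j -> As x - ts j *: x \in prevU (F m) j.
Proof.
move=> /T_S_lower; rewrite memv_cap; case: j => [|j] /andP[xT xS] /=.
  by rewrite (sum_pred_eq0 _ xT) ?mem0v.
rewrite memv_cap range_sumE; apply/andP; split; last by move: xS; rewrite addnS.
by move: xT; apply: sum_pred_mono => k _; lia.
Qed.

Lemma dec_0sD_raise i x : (i <= d)%N -> x \in U i -> A x - t i *: x \in nextU d U i.
Proof. move=> _; exact: (@F_raise 0 i x). Qed.

Lemma dec_0sD_lower i x : (i <= d)%N -> x \in U i -> As x - ts i *: x \in prevU U i.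
Proof. move=> _; exact: (@F_lower 0 i x). Qed.

Lemma dec_0sD_full : sum_pred d U predT = fullv.
Proof.
have [U0 | //] := raise_lower_sum_trivial dec_0sD_raise dec_0sD_lower.
have Es0 : (Es 0 <= sum_pred d U predT)%VS.
  apply/subvP => x xEs; apply: (mem_sum_pred (j := 0)) => //.
  by rewrite /dec_0sD Efull capvf range_sumE; apply: mem_sum_pred xEs.
by case/negP: (standard_ordering_neq0 SOs (leq0n d)); rewrite -subv0 -U0.
Qed.

Lemma cap_T_S_succ i : (T i :&: S i.+1 = 0)%VS.
Proof.
have [di | id] := ltnP d i.
  apply/eqP; rewrite -subv0; apply/subvP => x; rewrite memv_cap => /andP[_ xS].
  by rewrite (range_sum_above _ xS) ?mem0v //; lia.
have [F0 | Ffull] := raise_lower_sum_trivial (fun j x _ => @F_raise 1 j x)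
  (fun j x _ => @F_lower 1 j x).
  by apply/eqP; rewrite -subv0 -F0; apply/subvP => x; apply: mem_sum_pred.
have S1 : (sum_pred d (F 1) predT <= S 1)%VS.
  apply/subvP; apply: sum_pred_sub => j x _ _; rewrite memv_cap => /andP[_].
  exact: range_sum_mono.
case/negP: (standard_ordering_neq0 SO (leq0n d)); rewrite -vpick0; apply/eqP.
apply: (eigen_sum_out (P := fun j => (1 <= j <= d)%N) SO Et (leq0n d) (memv_pick _)) => //.
by rewrite -range_sumE (subvP S1) // Ffull memvf.
Qed.

Lemma sum_dec_0sD_T j x : x \in sum_pred d U (fun k => (k <= j)%N) -> x \in T j.
Proof.
apply: sum_pred_sub => k y _ kj; rewrite memv_cap => /andP[yT _].
exact: range_sum_mono yT.
Qed.

Lemma sum_dec_0sD_S j x : x \in sum_pred d U (fun k => (j <= k)%N) -> x \in S j.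
Proof.
apply: sum_pred_sub => k y _ jk; rewrite memv_cap => /andP[_ yS].
exact: range_sum_mono yS.
Qed.

Lemma dec_0sD_cut j x : exists2 y, y \in sum_pred d U (fun k => (k <= j)%N) &
  x - y \in sum_pred d U (fun k => (j < k)%N).
Proof.
have : x \in sum_pred d U predT by rewrite dec_0sD_full memvf.
rewrite (sum_predID _ _ _ (fun k => (k <= j)%N)) => /memv_addP[y yl [z zr ->]].
exists y; first by move: yl; apply: sum_pred_mono.
by rewrite [y + z]addrC addrK; move: zr; apply: sum_pred_mono => k _; rewrite !inE /=; lia.
Qed.

Lemma dec_0sD_flag_T j x : x \in T j -> x \in sum_pred d U (fun k => (k <= j)%N).
Proof.
move=> xT; have [y yl xy] := dec_0sD_cut j x.
suff: x - y = 0 by move/eqP; rewrite subr_eq0 => /eqP ->.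
apply/eqP; rewrite -memv0 -(cap_T_S_succ j) memv_cap.
by rewrite (sum_dec_0sD_S xy) rpredB // (sum_dec_0sD_T yl).
Qed.

Lemma dec_0sD_flag_S j x : x \in S j -> x \in sum_pred d U (fun k => (j <= k)%N).
Proof.
case: j => [|j] xS.
  by have : x \in sum_pred d U predT by rewrite dec_0sD_full memvf.
have [y yl xy] := dec_0sD_cut j x.
suff y0 : y = 0 by move: xy; rewrite y0 subr0.
apply/eqP; rewrite -memv0 -(cap_T_S_succ j) memv_cap (sum_dec_0sD_T yl).
have -> : y = x - (x - y) by rewrite opprB addrC subrK.
by rewrite rpredB // (sum_dec_0sD_S xy).
Qed.

End SplitDecomposition.
End Irreducible.

Section Endomorphisms.
Variables (K : fieldType) (V : vectType K).

Lemma limg_subvP (f : 'End(V)) (U W : {vspace V}) :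
  reflect (forall x, x \in U -> f x \in W) (f @: U <= W)%VS.
Proof.
apply: (iffP subvP) => [fUW x xU | fUW _ /memv_imgP[x xU ->]]; last exact: fUW.
by apply: fUW; apply: memv_img.
Qed.

Lemma lfun_inv_stable (f g : 'End(V)) (L : {vspace V}) :
  (forall x, g (f x) = x) -> (f @: L <= L)%VS -> (g @: L <= L)%VS.
Proof.
move=> fK fL.
have f_inj : lker f == 0%VS by apply/lker0P; apply: can_inj fK.
have fLL : (f @: L)%VS = L.
  by apply/eqP; rewrite eqEdim fL /= limg_dim_eq // (eqP f_inj) capv0.
apply/subvP => _ /memv_imgP[x + ->]; rewrite -{1}fLL => /memv_imgP[y yL ->].
by rewrite fK.
Qed.

Lemma twisted_commutator_scalar n (U : nat -> {vspace V}) (f k : 'End(V))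
    (kap th : nat -> K) (rho al : K) :
  sum_pred n U predT = fullv ->
  (forall i x, (i <= n)%N -> x \in U i -> k x = kap i *: x) ->
  (forall i x, (i <= n)%N -> x \in U i ->
     k (f x - th i *: x) = (rho * kap i) *: (f x - th i *: x)) ->
  (forall i, (i <= n)%N -> th i * kap i = al) ->
  forall v, rho *: f (k v) - k (f v) = ((rho - 1) * al) *: v.
Proof.
move=> Ufull kU kf thk v; apply/eqP; rewrite -subr_eq0 -memv0.
have -> : rho *: f (k v) - k (f v) = (rho *: (f \o k) - (k \o f))%VF v.
  by rewrite !lfun_simp.
apply: sum_pred_shift (_ : v \in sum_pred n U predT); last by rewrite Ufull memvf.
move=> i x id _ xU; rewrite !lfun_simp /= memv0; apply/eqP.
have kw := kf i x id xU; set w := f x - _ in kw.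
have fx : f x = w + th i *: x by rewrite /w subrK.
rewrite (kU i x id xU) linearZ /= fx [k (_ + _)]linearD /= kw [k (_ *: _)]linearZ /=.
rewrite (kU i x id xU) -(thk i id) !scalerDr !scalerA opprD addrACA subrr add0r.
by rewrite -!scalerBl mulrBl mul1r -mulrA [kap i * th i]mulrC subrr scale0r.
Qed.

Section Triangular.
Variables (d : nat) (E : nat -> {vspace V}).
Implicit Types (f g : 'End(V)) (c : nat -> K).

Definition lower_bidiagonal (f : 'End(V)) (c : nat -> K) :=
  forall i x, (i <= d)%N -> x \in E i -> f x - c i *: x \in prevU E i.

Definition lower_triangular (f : 'End(V)) (c : nat -> K) :=
  forall i x, (i <= d)%N -> x \in E i ->
    f x - c i *: x \in sum_pred d E (fun j => (j < i)%N).

Lemma lower_bidiagonal_triangular f c : lower_bidiagonal f c -> lower_triangular f c.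
Proof.
move=> fb i x id /(fb i x id); case: i id => [|i] id /=.
  by rewrite memv0 => /eqP->; rewrite mem0v.
by apply: mem_sum_pred => //; exact: ltnW.
Qed.

Lemma lower_triangular_shift f c m x : lower_triangular f c ->
  x \in sum_pred d E (fun j => (j <= m)%N) ->
  f x - c m *: x \in sum_pred d E (fun j => (j < m)%N).
Proof.
move=> ft; apply: sum_pred_shift => j y jd /= jm yE.
rewrite -[f y](subrK (c j *: y)) -addrA -scalerBl rpredD //.
  by move: (ft j y jd yE); apply: sum_pred_mono => k _; lia.
have [-> | jnm] := eqVneq j m; first by rewrite subrr scale0r rpred0.
by apply: rpredZ; apply: mem_sum_pred yE; lia.
Qed.

Lemma lower_triangular_stable f c m x : lower_triangular f c ->
  x \in sum_pred d E (fun j => (j < m)%N) -> f x \in sum_pred d E (fun j => (j < m)%N).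
Proof.
move=> ft xE; rewrite -[f x](subrK (c m *: x)) rpredD ?rpredZ //.
by apply: lower_triangular_shift ft _; move: xE; apply: sum_pred_mono => j _ /ltnW.
Qed.

Lemma lower_triangular_inv f g c (c' : nat -> K) :
  (forall x, g (f x) = x) -> (forall i, c i * c' i = 1) ->
  lower_triangular f c -> lower_triangular g c'.
Proof.
move=> fK cc' ft i x id xE.
have -> : g x - c' i *: x = - c' i *: g (f x - c i *: x).
  rewrite [g (_ - _)]linearB /= fK [g (_ *: _)]linearZ /= scaleNr scalerBr scalerA.
  by rewrite [c' i * _]mulrC cc' scale1r opprB.
apply/rpredZ/(subvP (lfun_inv_stable fK _))/memv_img; last exact: ft.
by apply/subvP => _ /memv_imgP[y yE ->]; apply: lower_triangular_stable ft yE.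
Qed.

Lemma lower_bidiagonal_upper f c m x : lower_bidiagonal f c ->
  x \in range_sum d E m d -> f x \in range_sum d E m.-1 d.
Proof.
move=> fb; rewrite !range_sumE; apply: sum_pred_lfun => j y jd /= jm yE.
rewrite -[f y](subrK (c j *: y)) rpredD ?rpredZ //; last first.
  by apply: mem_sum_pred yE; lia.
move: (fb j y jd yE); case: j jd jm {yE} => [|j] jd jm /=.
  by rewrite memv0 => /eqP->; rewrite mem0v.
by apply: mem_sum_pred; [exact: ltnW | lia].
Qed.

End Triangular.

End Endomorphisms.

Section QPowers.
Variables (K : fieldType) (q : K).
Hypothesis q0 : q != 0.

Lemma qpowS d i : qpow q d i.+1 = q ^+ 2 * qpow q d i.
Proof.
rewrite /qpow; have -> : (2 * i.+1)%:Z - d%:Z = 2%:Z + ((2 * i)%:Z - d%:Z) by lia.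
by rewrite expfzDr.
Qed.

Lemma qpowNS d i : qpowN q d i = q ^+ 2 * qpowN q d i.+1.
Proof.
rewrite /qpowN; have -> : d%:Z - (2 * i)%:Z = 2%:Z + (d%:Z - (2 * i.+1)%:Z) by lia.
by rewrite expfzDr.
Qed.

Lemma qpowNK d i : qpowN q d i * qpow q d i = 1.
Proof. by rewrite /qpowN /qpow -expfzDr // addrA subrK subrr expr0z. Qed.

Lemma qpow_subn d i : (i <= d)%N -> qpow q d (d - i) = qpowN q d i.
Proof. by move=> id; rewrite /qpow /qpowN; congr (_ ^ _); lia. Qed.

Lemma qpowN_subn d i : (i <= d)%N -> qpowN q d (d - i) = qpow q d i.
Proof. by move=> id; rewrite /qpow /qpowN; congr (_ ^ _); lia. Qed.

Hypothesis q_not_root1 : forall n : nat, (0 < n)%N -> q ^+ n != 1.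

Lemma expfz_inj (z1 z2 : int) : q ^ z1 = q ^ z2 -> z1 = z2.
Proof.
move=> qz; apply/eqP; rewrite -subr_eq0; apply/negPn/negP => z_neq0.
have : q ^ (z1 - z2) = 1 by rewrite expfzDr // -invr_expz qz mulfV // expfz_neq0.
case: (z1 - z2) z_neq0 => [[|n] //|n] _.
  by apply/eqP; apply: q_not_root1.
by rewrite NegzE -exprnN => /eqP; rewrite invr_eq1; apply/negP/q_not_root1.
Qed.

Lemma qpow_inj d i j : qpow q d i = qpow q d j -> i = j.
Proof. by rewrite /qpow => /expfz_inj; lia. Qed.

Lemma twisted_commutator_lowering (V : vectType K) (f g k : 'End(V)) d
    (E : nat -> {vspace V}) al :
  standard_ordering f g d E -> al != 0 ->
  (forall i, (i <= d)%N -> E i = passmx.leigenspace f (al * qpow q d i)) ->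
  (forall v, q ^+ 2 *: f (k v) - k (f v) = ((q ^+ 2 - 1) * al) *: v) ->
  lower_bidiagonal d E k (qpowN q d).
Proof.
move=> SO al0 Et comm i x id xE.
have fx : f x = (al * qpow q d i) *: x by apply/eqP; rewrite -(eigenvectorP Et).
set w := k x - qpowN q d i *: x.
have fw : q ^+ 2 *: f w = (al * qpow q d i) *: w.
  have := comm x; rewrite fx linearZ /= => /eqP; rewrite subr_eq => /eqP fkx.
  have ct : qpowN q d i * (al * qpow q d i) = al by rewrite mulrCA qpowNK // mulr1.
  rewrite /w linearB linearZ /= fx !scalerBr fkx !scalerA -mulrA ct [al * _ * _]mulrC ct.
  by rewrite addrAC -scalerBl mulrBl mul1r addrAC subrr add0r scaleNr addrC.
have q2_0 : q ^+ 2 != 0 by rewrite expf_neq0.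
clearbody w; case: i id xE fx fw => [|i] id xE fx fw /=; last first.
  rewrite (eigenvectorP Et _ (ltnW id)); apply/eqP/(scalerI q2_0).
  by rewrite fw scalerA qpowS mulrCA.
(* For i = 0, w would be an eigenvector of f for q^-2 (al * qpow q d 0),
   which is not an eigenvalue of f. *)
rewrite memv0; apply/negPn/negP => w0.
have fw' : f w = (q ^- 2 * (al * qpow q d 0)) *: w.
  by rewrite -scalerA -fw scalerA mulVf // scale1r.
have [j jd e] := eigenvalue_exhaustive SO Et fw' w0.
have : al * qpow q d 0 = al * qpow q d j.+1 by rewrite qpowS mulrCA -e mulVKf.
by move/(mulfI al0)/qpow_inj.
Qed.

End QPowers.


Section Main.
Variables (K : fieldType) (q : K) (V : vectType K) (A As : 'End(V)) (d : nat)
  (Vs Vss : nat -> {vspace V}) (a as_ : K) (Ks : 'End(V)).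
Hypotheses (q0 : q != 0) (q_not_root1 : forall n : nat, (0 < n)%N -> q ^+ n != 1).
Hypothesis TD : TD_pair A As.
Hypotheses (SO : standard_ordering A As d Vs) (SOs : standard_ordering As A d Vss).
Hypotheses (a0 : a != 0) (as0 : as_ != 0).
Hypothesis HVs : forall i, (i <= d)%N -> Vs i = passmx.leigenspace A (a * qpow q d i).
Hypothesis HVss :
  forall i, (i <= d)%N -> Vss i = passmx.leigenspace As (as_ * qpowN q d i).
Hypothesis HKs : forall i, (i <= d)%N -> forall v, v \in dec_Ds0 d Vs Vss i ->
  Ks v = qpow q d i *: v.

Local Notation Vs' := (fun i => Vs (d - i)%N).
Local Notation Vss' := (fun i => Vss (d - i)%N).
Local Notation Ksi := (Ks^-1)%VF.

Let irr : forall W : {vspace V},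
  (A @: W <= W)%VS -> (As @: W <= W)%VS -> W = 0%VS \/ W = fullv.
Proof. by case: TD => _ []. Qed.

Let SO' := standard_ordering_rev SO.
Let SOs' := standard_ordering_rev SOs.

Let HVs' i : (i <= d)%N -> Vs' i = passmx.leigenspace A (a * qpow q d (d - i)).
Proof. by move=> _; apply: HVs; apply: leq_subr. Qed.

Let HVss' i : (i <= d)%N -> Vss' i = passmx.leigenspace As (as_ * qpow q d i).
Proof. by move=> id /=; rewrite HVss ?leq_subr // qpowN_subn. Qed.

Let Vs_full : range_sum d Vs 0 d = fullv.
Proof. by case: TD => _ [diagA _ _ _ _]; apply: range_sum_full SO diagA. Qed.

Let Vs'_full : range_sum d Vs' 0 d = fullv.
Proof. by rewrite range_sum_rev // subnn subn0. Qed.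

Lemma dec_Ds0_rev i : (i <= d)%N -> dec_Ds0 d Vs Vss i = dec_0sD d Vs' Vss' i.
Proof. by move=> id; rewrite /dec_0sD !range_sum_rev // subn0 subnn. Qed.

Lemma dec_0s0_rev i : (i <= d)%N -> dec_0s0 d Vs Vss i = dec_0sD d Vs' Vss i.
Proof. by move=> id; rewrite /dec_0sD range_sum_rev // subnn. Qed.

Lemma dec_DsD_rev i : (i <= d)%N -> dec_DsD d Vs Vss i = dec_0sD d Vs Vss' i.
Proof. by move=> id; rewrite /dec_0sD range_sum_rev // subn0. Qed.

Lemma Ks_Ds0 i x : (i <= d)%N -> x \in dec_0sD d Vs' Vss' i -> Ks x = qpow q d i *: x.
Proof. by move=> id; rewrite -dec_Ds0_rev //; apply: HKs. Qed.

Let Ds0_full : sum_pred d (dec_0sD d Vs' Vss') predT = fullv.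
Proof. exact (dec_0sD_full irr SO' SOs' HVs' HVss' Vs'_full). Qed.

Lemma Ks_Ds0_preimage i x : (i <= d)%N -> x \in dec_0sD d Vs' Vss' i ->
  Ks (qpowN q d i *: x) = x.
Proof. by move=> id xU; rewrite linearZ /= (Ks_Ds0 id xU) scalerA qpowNK // scale1r. Qed.

Lemma Ks_inj : lker Ks == 0%VS.
Proof.
have Ks_onto : limg Ks = fullv.
  apply/eqP; rewrite eqEsubv subvf /= -[X in (X <= _)%VS]Ds0_full; apply/subvP.
  apply: sum_pred_sub => i x id _ xU.
  by rewrite -(Ks_Ds0_preimage id xU) memv_img ?memvf.
have := limg_ker_dim Ks fullv; rewrite Ks_onto capfv -{2}[\dim fullv]add0n.
by move/addIn/eqP; rewrite dimv_eq0.
Qed.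

Lemma KsK x : Ksi (Ks x) = x. Proof. exact: (lker0_lfunK Ks_inj). Qed.
Lemma KsiK x : Ks (Ksi x) = x. Proof. exact: (lker0_lfunVK Ks_inj). Qed.

Lemma Ksi_Ds0 i x : (i <= d)%N -> x \in dec_0sD d Vs' Vss' i -> Ksi x = qpowN q d i *: x.
Proof. by move=> id xU; rewrite -{1}(Ks_Ds0_preimage id xU) KsK. Qed.

Lemma A_Ks_twisted_commutator v :
  q ^+ 2 *: A (Ks v) - Ks (A v) = ((q ^+ 2 - 1) * a) *: v.
Proof.
apply: (twisted_commutator_scalar (th := fun i => a * qpow q d (d - i)) Ds0_full Ks_Ds0).
  move=> i x id /(dec_0sD_raise SOs' HVs' id); rewrite /nextU; case: ifP => [id' | _].
    by move/(Ks_Ds0 id'); rewrite qpowS.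
  by rewrite memv0 => /eqP->; rewrite linear0 scaler0.
by move=> i id; rewrite qpow_subn // -mulrA qpowNK // mulr1.
Qed.

Lemma As_Ksi_twisted_commutator v :
  q ^+ 2 *: As (Ksi v) - Ksi (As v) = ((q ^+ 2 - 1) * as_) *: v.
Proof.
apply: (twisted_commutator_scalar (th := fun i => as_ * qpow q d i) Ds0_full Ksi_Ds0).
  move=> [|i] x id /(dec_0sD_lower SO' HVss' id) /=.
    by rewrite memv0 => /eqP->; rewrite linear0 scaler0.
  by move/(Ksi_Ds0 (ltnW id)); rewrite -qpowNS.
by move=> i id; rewrite -mulrA [qpow q d i * _]mulrC qpowNK // mulr1.
Qed.

Lemma Ks_lower_bidiagonal : lower_bidiagonal d Vs Ks (qpowN q d).
Proof.
exact (twisted_commutator_lowering q0 q_not_root1 SO a0 HVs A_Ks_twisted_commutator).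
Qed.

Lemma Ksi_lower_bidiagonal : lower_bidiagonal d Vss' Ksi (qpowN q d).
Proof.
exact (twisted_commutator_lowering q0 q_not_root1 SOs' as0 HVss'
  As_Ksi_twisted_commutator).
Qed.

Lemma Ksi_lower_triangular : lower_triangular d Vs Ksi (qpow q d).
Proof.
exact: lower_triangular_inv KsK (qpowNK q0 d)
  (lower_bidiagonal_triangular Ks_lower_bidiagonal).
Qed.

Lemma Ks_lower_triangular : lower_triangular d Vss' Ks (qpow q d).
Proof.
exact: lower_triangular_inv KsiK (qpowNK q0 d)
  (lower_bidiagonal_triangular Ksi_lower_bidiagonal).
Qed.

Lemma Ksi_raises_Vss i x :
  x \in range_sum d Vss 0 i -> Ksi x \in range_sum d Vss 0 i.+1.
Proof.
move=> xT; have : x \in range_sum d Vss' (d - i) d.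
  by move: xT; rewrite !range_sumE sum_pred_rev; apply: sum_pred_mono => j _; lia.
move/(lower_bidiagonal_upper Ksi_lower_bidiagonal); rewrite !range_sumE sum_pred_rev.
by apply: sum_pred_mono => j jd; lia.
Qed.

Lemma dec_0D_Ks i : (i <= d)%N -> let U := dec_0D d Vs Vss in
  ((Ks - qpowN q d i *: \1%VF) @: U i <= prevU U i)%VS /\
  ((Ksi - qpow q d i *: \1%VF) @: U i <= sum_pred d U (fun j => (j < i)%N))%VS.
Proof.
by move=> id /=; split; apply/limg_subvP => x xU; rewrite !lfun_simp;
  [apply: Ks_lower_bidiagonal | apply: Ksi_lower_triangular].
Qed.

Lemma dec_0sDs_Ks i : (i <= d)%N -> let U := dec_0sDs d Vs Vss in
  ((Ks - qpowN q d i *: \1%VF) @: U i <= sum_pred d U (fun j => (i < j)%N))%VS /\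
  ((Ksi - qpow q d i *: \1%VF) @: U i <= nextU d U i)%VS.
Proof.
move=> id /=; have di := leq_subr i d.
have Vss_rev x : x \in Vss i -> x \in Vss' (d - i)%N by rewrite /= subKn.
split; apply/limg_subvP => x /Vss_rev xU; rewrite !lfun_simp.
  move: (Ks_lower_triangular di xU); rewrite qpow_subn // sum_pred_rev.
  by apply: sum_pred_mono => j _; lia.
by move: (Ksi_lower_bidiagonal di xU); rewrite qpowN_subn // prevU_rev.
Qed.

Lemma dec_0sD_Ks i : (i <= d)%N -> let U := dec_0sD d Vs Vss in
  (Ks @: U i <= sum_pred d U (fun j => (i <= j.+1)%N))%VS /\
  (Ksi @: U i <= sum_pred d U (fun j => (j <= i.+1)%N))%VS.
Proof.
move=> id /=; split; apply/limg_subvP => x; rewrite memv_cap => /andP[xT xS].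
  have := lower_bidiagonal_upper Ks_lower_bidiagonal xS.
  move/(dec_0sD_flag_S irr SO SOs HVs HVss Vs_full); apply: sum_pred_mono => j _; lia.
move/Ksi_raises_Vss/(dec_0sD_flag_T irr SO SOs HVs HVss Vs_full): xT.
by apply: sum_pred_mono => j _; lia.
Qed.

Lemma dec_0s0_Ks i : (i <= d)%N -> let U := dec_0s0 d Vs Vss in
  ((Ks - qpow q d i *: \1%VF) @: U i <= sum_pred d U (fun j => (i < j)%N))%VS /\
  ((Ksi - qpowN q d i *: \1%VF) @: U i <= nextU d U i)%VS.
Proof.
move=> id /=; split; apply/limg_subvP => x; rewrite !lfun_simp memv_cap => /andP[xT xS].
  have := lower_triangular_shift (lower_bidiagonal_triangular Ks_lower_bidiagonal) xS.
  rewrite qpowN_subn // (eq_sum_pred _ dec_0s0_rev) => y_in.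
  apply: (dec_0sD_flag_S irr SO' SOs HVs' HVss Vs'_full).
  by rewrite range_sumE sum_pred_rev; move: y_in; apply: sum_pred_mono => j _; lia.
have := lower_triangular_shift Ksi_lower_triangular xS; rewrite qpow_subn // => y_in.
rewrite /nextU; case: ifP => [i_d | /negbT]; last first.
  by rewrite -leqNgt => di; rewrite (sum_pred_eq0 _ y_in) ?mem0v // => j _; lia.
rewrite memv_cap; apply/andP; split.
  by rewrite rpredB ?rpredZ ?(Ksi_raises_Vss xT) ?(range_sum_mono _ _ xT).
by rewrite range_sumE; move: y_in; apply: sum_pred_mono => j _; lia.
Qed.

Lemma dec_Ds0_Ks i : (i <= d)%N -> let U := dec_Ds0 d Vs Vss in
  ((Ks - qpow q d i *: \1%VF) @: U i = 0 /\
   (Ksi - qpowN q d i *: \1%VF) @: U i = 0)%VS.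
Proof.
move=> id /=; rewrite dec_Ds0_rev //.
split; apply/eqP; rewrite -subv0; apply/limg_subvP => x xU; rewrite !lfun_simp.
  by rewrite (Ks_Ds0 id xU) subrr mem0v.
by rewrite (Ksi_Ds0 id xU) subrr mem0v.
Qed.

Lemma dec_DsD_Ks i : (i <= d)%N -> let U := dec_DsD d Vs Vss in
  ((Ks - qpow q d i *: \1%VF) @: U i <= prevU U i)%VS /\
  ((Ksi - qpowN q d i *: \1%VF) @: U i <= sum_pred d U (fun j => (j < i)%N))%VS.
Proof.
move=> id /=.
have Vss_rev x : x \in range_sum d Vss (d - i) d ->
    x \in sum_pred d Vss' (fun j => (j <= i)%N).
  by rewrite range_sumE sum_pred_rev; apply: sum_pred_mono => j _; lia.
split; apply/limg_subvP => x; rewrite !lfun_simp memv_cap => /andP[/Vss_rev xT xS].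
  have := lower_triangular_shift Ks_lower_triangular xT.
  case: i id xS {xT Vss_rev} => [|i] id xS y_in /=.
    by rewrite (sum_pred_eq0 _ y_in) ?mem0v.
  rewrite memv_cap; apply/andP; split.
    rewrite range_sumE; move: y_in; rewrite sum_pred_rev.
    by apply: sum_pred_mono => j jd; lia.
  rewrite rpredB ?rpredZ ?(range_sum_mono _ _ xS) //.
  exact: lower_bidiagonal_upper Ks_lower_bidiagonal xS.
have := lower_triangular_shift (lower_bidiagonal_triangular Ksi_lower_bidiagonal) xT.
rewrite (eq_sum_pred _ dec_DsD_rev).
case: i id {xT xS Vss_rev} => [|i] id y_in; first by rewrite (sum_pred_eq0 _ y_in) ?mem0v.
by move: (dec_0sD_flag_T irr SO SOs' HVs HVss' Vs_full y_in); apply: sum_pred_mono.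
Qed.

End Main.

Unset Implicit Arguments.
Local Open Scope vspace_scope.

Theorem theorem11p2 (K : closedFieldType) (q : K) (V : vectType K)
  (A As : 'End(V)) (d : nat) (Vs Vss : nat -> {vspace V}) (a as_ : K)
  (Ks : 'End(V)) :
  q != 0%R -> (forall n : nat, (0 < n)%N -> q ^+ n != 1%R) ->
  TD_pair A As ->
  standard_ordering A As d Vs -> standard_ordering As A d Vss ->
  a != 0%R -> as_ != 0%R ->
  (forall i, (i <= d)%N -> Vs i = passmx.leigenspace A (a * qpow q d i)) ->
  (forall i, (i <= d)%N -> Vss i = passmx.leigenspace As (as_ * qpowN q d i)) ->
  (forall i, (i <= d)%N -> forall v, v \in dec_Ds0 d Vs Vss i ->
     Ks v = qpow q d i *: v) ->
  let Ksi := (Ks^-1)%VF in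
  let I := (\1)%VF in
  (
  (* [0D] *)
  (forall i, (i <= d)%N -> let U := dec_0D d Vs Vss in
     ((Ks - qpowN q d i *: I) @: U i <= prevU U i)%VS /\
     ((Ksi - qpow q d i *: I) @: U i <= sum_pred d U (fun j => (j < i)%N))%VS) /\
  (* [0*D*] *)
  (forall i, (i <= d)%N -> let U := dec_0sDs d Vs Vss in
     ((Ks - qpowN q d i *: I) @: U i <= sum_pred d U (fun j => (i < j)%N))%VS /\
     ((Ksi - qpow q d i *: I) @: U i <= nextU d U i)%VS) /\
  (* [0*D] *)
  (forall i, (i <= d)%N -> let U := dec_0sD d Vs Vss in
     (Ks @: U i <= sum_pred d U (fun j => (i <= j.+1)%N))%VS /\
     (Ksi @: U i <= sum_pred d U (fun j => (j <= i.+1)%N))%VS) /\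
  (* [0*0] *)
  (forall i, (i <= d)%N -> let U := dec_0s0 d Vs Vss in
     ((Ks - qpow q d i *: I) @: U i <= sum_pred d U (fun j => (i < j)%N))%VS /\
     ((Ksi - qpowN q d i *: I) @: U i <= nextU d U i)%VS) /\
  (* [D*0] *)
  (forall i, (i <= d)%N -> let U := dec_Ds0 d Vs Vss in
     (Ks - qpow q d i *: I) @: U i = 0%VS /\
     (Ksi - qpowN q d i *: I) @: U i = 0%VS) /\
  (* [D*D] *)
  (forall i, (i <= d)%N -> let U := dec_DsD d Vs Vss in
     ((Ks - qpow q d i *: I) @: U i <= prevU U i)%VS /\
     ((Ksi - qpowN q d i *: I) @: U i <= sum_pred d U (fun j => (j < i)%N))%VS)).
Proof.
move=> q0 qr TD SO SOs a0 as0 HVs HVss HKs Ksi I.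
split; [|split; [|split; [|split; [|split]]]] => i id.
- exact (dec_0D_Ks q0 qr TD SO SOs a0 HVs HVss HKs id).
- exact (dec_0sDs_Ks q0 qr TD SO SOs a0 as0 HVs HVss HKs id).
- exact (dec_0sD_Ks q0 qr TD SO SOs a0 as0 HVs HVss HKs id).
- exact (dec_0s0_Ks q0 qr TD SO SOs a0 as0 HVs HVss HKs id).
- exact (dec_Ds0_Ks q0 TD SO SOs HVs HVss HKs id).
- exact (dec_DsD_Ks q0 qr TD SO SOs a0 as0 HVs HVss HKs id).
Qed.
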